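(* Let $G=(V,E,\Omega)$ be a connected finite graph with vertex set $V\subset\mathbb{R}^n$, edge set $E$ and a non-empty set $\Omega\subset V$, and let $f:\Omega\to\mathbb{R}^m$. Let $u\in E(f)$ and $x\in V\setminus\Omega$. Define $v:V\to\mathbb{R}^m$ by $v(y)=u(y)$ for $y\in V\setminus\{x\}$ and $v(x)=K(u,S(x))(x)$. If $K(u,S(x))(x)\neq u(x)$, then $v$ is tighter than $u$ on $G$.
   Context: For $x\in V$, $S(x):=\{y\in V:(x,y)\in E\}$ is the neighborhood of $x$ in $G$. $E(f)$ denotes the set of all extensions of $f$ to $V$, i.e. functions $V\to\mathbb{R}^m$ agreeing with $f$ on $\Omega$; $\|\cdot\|$ is the Euclidean norm. For a finite set $A\subset\mathbb{R}^n$, a map $g:A\to\mathbb{R}^m$ and $x\in\mathbb{R}^n\setminus A$, there is a unique $y\in\mathbb{R}^m$ minimizing $\sup_{a\in A}\|g(a)-y\|/\|a-x\|$; this minimizer is denoted $K(g,A)(x)$ (the Kirszbraun value of $g$ restricted to $A$ at $x$). For $w\in E(f)$ and $x\in V\setminus\Omega$, the local Lipschitz constant is $Lw(x):=\sup_{y\in S(x)}\|w(y)-w(x)\|/\|y-x\|$. For $u,v\in E(f)$, $v$ is tighter than $u$ on $G$ if $\max\{Lu(x):Lu(x)>Lv(x),\,x\in V\setminus\Omega\}>\max\{Lv(x):Lv(x)>Lu(x),\,x\in V\setminus\Omega\}$, with the convention that the maximum over the empty set is $0$. *)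

From HB Require Import structures.
From mathcomp Require Import all_boot all_order all_algebra.
Set Implicit Arguments. Unset Strict Implicit. Unset Printing Implicit Defensive.
Import Order.TTheory GRing.Theory Num.Theory.
Local Open Scope ring_scope.

Definition enorm (R : rcfType) (k : nat) (v : 'rV[R]_k) : R :=
  Num.sqrt (\sum_(i < k) v 0 i ^+ 2).

Section Graph.
Variables (R : rcfType) (n m : nat) (T : finType).
Variable pos : T -> 'rV[R]_n.
Variable e : rel T.

Definition nbhd (x : T) : {set T} := [set y | e x y].

(* sup_{a in A} ||g a - y|| / ||a - x|| (A finite; values are >= 0, so 0 is
   a neutral starting point for a nonempty A) *)
Definition Kratio (g : T -> 'rV[R]_m) (A : {set T}) (x : T) (y : 'rV[R]_m) : R :=
  \big[Num.max/0]_(a in A) (enorm (g a - y) / enorm (pos a - pos x)).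

(* y is the Kirszbraun value K(g,A)(x), i.e. the minimizer of Kratio *)
Definition is_Kvalue (g : T -> 'rV[R]_m) (A : {set T}) (x : T) (y : 'rV[R]_m) : Prop :=
  forall y', Kratio g A x y <= Kratio g A x y'.

Definition Lip (w : T -> 'rV[R]_m) (x : T) : R :=
  \big[Num.max/0]_(y in nbhd x) (enorm (w y - w x) / enorm (pos y - pos x)).

(* v is tighter than u on G (max over empty set is 0; Lip values are >= 0) *)
Definition tighter (Omega : {set T}) (v u : T -> 'rV[R]_m) : Prop :=
  \big[Num.max/0]_(z | (z \notin Omega) && (Lip v z < Lip u z)) Lip u z >
  \big[Num.max/0]_(z | (z \notin Omega) && (Lip u z < Lip v z)) Lip v z.

Definition extension (Omega : {set T}) (f : T -> 'rV[R]_m) (u : T -> 'rV[R]_m) : Prop :=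
  forall z, z \in Omega -> u z = f z.
End Graph.

From HB Require Import structures.
From mathcomp Require Import all_boot all_order all_algebra.
From mathcomp Require Import ring lra.
Import Order.TTheory GRing.Theory Num.Theory.
Set Implicit Arguments. Unset Strict Implicit.
Local Open Scope ring_scope.

(* By the parallelogram law, Euclidean balls are strictly convex: the midpoint
   of two distinct points of a closed ball lies in the open ball. Hence the
   midpoint of [K(u,S(x))(x)] and [u(x)] has a strictly smaller Kirszbraun
   ratio than [u(x)], whose ratio is [Lu(x)]; as [K(u,S(x))(x)] minimizes the
   ratio, [Lv(x) < Lu(x)]. At every other vertex [z], the only new term of
   [Lv(z)] is the term of [Lv(x)] for the edge [zx], so
   [Lv(z) <= max (Lu(z), Lv(x))]. Every vertex where [v] is worse than [u] thus
   has [Lv <= Lv(x) < Lu(x)], while [x] itself is a vertex where [v] is better. *)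

Section EuclideanNorm.
Variables (R : rcfType) (k : nat).
Implicit Types (v g y z : 'rV[R]_k).

Lemma enorm_ge0 v : 0 <= enorm v.
Proof. exact: sqrtr_ge0. Qed.

Lemma enorm_sqr v : enorm v ^+ 2 = \sum_(i < k) v 0 i ^+ 2.
Proof. by rewrite sqr_sqrtr // sumr_ge0 // => i _; rewrite sqr_ge0. Qed.

Lemma enorm_gt0 v : v != 0 -> 0 < enorm v.
Proof.
move=> v_neq0; rewrite lt_def enorm_ge0 andbT -sqrf_eq0 enorm_sqr.
rewrite psumr_eq0 => [|i _]; last by rewrite sqr_ge0.
apply: contra v_neq0 => /allP v_eq0; apply/eqP/matrixP => i j.
have := v_eq0 j (mem_index_enum j).
by rewrite ord1 mxE sqrf_eq0 => /eqP.
Qed.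

Lemma enorm_distC y z : enorm (y - z) = enorm (z - y).
Proof. by congr Num.sqrt; apply: eq_bigr => i _; rewrite !mxE -sqrrN opprB. Qed.

Lemma enorm_parallelogram g y z :
  enorm (g - 2^-1 *: (y + z)) ^+ 2 * 4 + enorm (y - z) ^+ 2 =
  2 * enorm (g - y) ^+ 2 + 2 * enorm (g - z) ^+ 2.
Proof.
rewrite !enorm_sqr mulr_suml !mulr_sumr -!big_split /=.
by apply: eq_bigr => i _; rewrite !mxE; field.
Qed.

Lemma enorm_midpoint_lt g y z c : y != z ->
  enorm (g - y) <= c -> enorm (g - z) <= c ->
  enorm (g - 2^-1 *: (y + z)) < c.
Proof.
move=> yz gy_le gz_le.
have d_gt0 : 0 < enorm (y - z) by rewrite enorm_gt0 // subr_eq0.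
have := enorm_parallelogram g y z.
have := enorm_ge0 (g - y); have := enorm_ge0 (g - z).
have := enorm_ge0 (g - 2^-1 *: (y + z)); nra.
Qed.

End EuclideanNorm.

Section KirszbraunRatio.
Variables (R : rcfType) (n m : nat) (T : finType) (pos : T -> 'rV[R]_n).
Variables (g : T -> 'rV[R]_m) (A : {set T}) (x : T).
Hypothesis A_neq0 : A != set0.
Hypothesis A_dist : forall a, a \in A -> pos a != pos x.

Lemma le_Kratio y a : a \in A ->
  enorm (g a - y) / enorm (pos a - pos x) <= Kratio pos g A x y.
Proof. exact: le_bigmax_cond. Qed.

Lemma Kratio_midpoint_lt y z : y != z ->
  Kratio pos g A x (2^-1 *: (y + z)) <
  Num.max (Kratio pos g A x y) (Kratio pos g A x z).
Proof.
move=> yz; set c := Num.max _ _.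
have ratio_lt a : a \in A ->
    enorm (g a - 2^-1 *: (y + z)) / enorm (pos a - pos x) < c.
  move=> aA; have d_gt0 : 0 < enorm (pos a - pos x).
    by rewrite enorm_gt0 // subr_eq0 A_dist.
  rewrite ltr_pdivrMr //; apply: enorm_midpoint_lt yz _ _.
    by rewrite -ler_pdivrMr // le_max le_Kratio.
  by rewrite -ler_pdivrMr // le_max (le_Kratio _ aA) orbT.
have c_gt0 : 0 < c.
  case/set0Pn: A_neq0 => a /ratio_lt; apply: le_lt_trans.
  by rewrite divr_ge0 ?enorm_ge0.
exact: bigmax_lt.
Qed.

Lemma Kvalue_lt y z : is_Kvalue pos g A x y -> y != z ->
  Kratio pos g A x y < Kratio pos g A x z.
Proof.
move=> Ky yz; have := Kratio_midpoint_lt yz.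
rewrite (max_idPr (Ky z)); exact/le_lt_trans/Ky.
Qed.

End KirszbraunRatio.

Section LocalLipschitz.
Variables (R : rcfType) (n m : nat) (T : finType) (pos : T -> 'rV[R]_n).
Variable e : rel T.
Hypotheses (e_sym : symmetric e) (e_irr : irreflexive e).

Lemma Lip_ge0 (w : T -> 'rV[R]_m) z : 0 <= Lip pos e w z.
Proof. exact: bigmax_ge_id. Qed.

Lemma nbhd_neq (x a : T) : a \in nbhd e x -> a != x.
Proof. by rewrite inE; apply: contraTneq => ->; rewrite e_irr. Qed.

Lemma nbhd_neq0 (x w : T) : (forall a b, connect e a b) -> w != x ->
  nbhd e x != set0.
Proof.
move=> e_conn wx; case/connectP: (e_conn x w) => [[|y p] /= p_path w_last].
  by rewrite -w_last eqxx in wx.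
by case/andP: p_path => xy _; apply/set0Pn; exists y; rewrite inE.
Qed.

Lemma tighter_of_local_decrease (Omega : {set T}) (v u : T -> 'rV[R]_m) x :
  x \notin Omega -> Lip pos e v x < Lip pos e u x ->
  (forall z, Lip pos e v z <= Num.max (Lip pos e u z) (Lip pos e v x)) ->
  tighter pos e Omega v u.
Proof.
move=> xO vx_lt v_le; apply: le_lt_trans (lt_le_trans vx_lt _).
  apply: bigmax_le => [|z /andP[_ uz_lt]]; first exact: Lip_ge0.
  by have := v_le z; rewrite le_max leNgt uz_lt.
by apply: le_bigmax_cond; rewrite xO vx_lt.
Qed.

Variables (u : T -> 'rV[R]_m) (x : T) (Kx : 'rV[R]_m).
Let v y := if y == x then Kx else u y.

Lemma Lip_update_at : Lip pos e v x = Kratio pos u (nbhd e x) x Kx.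
Proof. by apply: eq_bigr => y /nbhd_neq yx; rewrite /v eqxx (negPf yx). Qed.

Lemma Lip_update_le z : Lip pos e v z <= Num.max (Lip pos e u z) (Lip pos e v x).
Proof.
have [->|zx] := eqVneq z x; first by rewrite le_max lexx orbT.
apply: bigmax_le => [|y yz]; first by rewrite le_max Lip_ge0.
rewrite /v (negPf zx) le_max; have [yx|yx] := eqVneq y x.
  have xz : z \in nbhd e x by rewrite inE e_sym -yx -inE.
  rewrite yx Lip_update_at enorm_distC (enorm_distC (pos x)).
  by rewrite (le_Kratio _ _ _ _ xz) orbT.
by apply/orP; left; apply: le_bigmax_cond.
Qed.

End LocalLipschitz.

Theorem mainTheorem1 (R : rcfType) (n m : nat) (T : finType)
  (pos : T -> 'rV[R]_n) (e : rel T) (Omega : {set T})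
  (f : T -> 'rV[R]_m) (u : T -> 'rV[R]_m) (x : T) (Kx : 'rV[R]_m) :
  injective pos ->
  symmetric e -> irreflexive e ->
  (forall a b : T, connect e a b) ->
  Omega != set0 ->
  extension Omega f u ->
  x \notin Omega ->
  is_Kvalue pos u (nbhd e x) x Kx ->
  Kx != u x ->
  tighter pos e Omega (fun y => if y == x then Kx else u y) u.
Proof.
move=> pos_inj e_sym e_irr e_conn Omega_neq0 _ xO Kvalue Kx_neq.
have S_neq0 : nbhd e x != set0.
  case/set0Pn: Omega_neq0 => w wO; apply: (nbhd_neq0 (w := w) e_conn).
  by apply: contraNneq xO => <-.
have S_dist a : a \in nbhd e x -> pos a != pos x.
  by move/(nbhd_neq e_irr); apply: contra => /eqP/pos_inj->.
apply: tighter_of_local_decrease xO _ (Lip_update_le _ e_sym e_irr _ _ _).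
by rewrite Lip_update_at //; apply: Kvalue_lt.
Qed.
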